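(* Let $G=(V,E,c)$ and $t:V\to\mathbb{R}_{\ge 0}$, and let $F$ and $(y_S)_{S\subseteq V}$ be the output forest and final growth values of shadow moat growing on $(G,t)$. Then for every vertex $v\in V$, $$c(F)\le 2\sum_{S\subseteq V,\ v\notin S} y_S .$$
   Context: $G=(V,E,c)$ is an undirected graph with edge costs $c:E\to\mathbb{R}_{\ge0}$; for $S\subseteq V$, $\delta(S)$ is the set of edges with exactly one endpoint in $S$, and $c(F)=\sum_{e\in F}c_e$. Shadow moat growing on $(G,t)$, for a ''fingerprint'' $t:V\to\mathbb{R}_{\ge0}$, is the following continuous process in time $\tau\ge 0$. It maintains a forest $F$ (initially empty), the partition of $V$ into connected components of $(V,F)$, and values $y_S\ge 0$ for all $S\subseteq V$ (initially $0$). At time $\tau$ a component $C$ is active iff it contains a vertex $w$ with $t_w>\tau$. Every active component $C$ increases $y_C$ at rate $1$; other $y_S$ stay fixed. Whenever an edge $e$ whose endpoints lie in different components satisfies $\sum_{S:\,e\in\delta(S)}y_S=c_e$, $e$ is added to $F$ and the two components merge (simultaneous events are processed one at a time by a fixed rule; edges whose endpoints are already in a common component are skipped). The process stops when no component is active. Finally, in a pruning phase, let $\mathcal D$ be the family of all vertex sets that were an inactive component at some moment; while some $S\in\mathcal D$ has $|\delta(S)\cap F|=1$, the unique edge of $\delta(S)\cap F$ is removed from $F$. The remaining $F$ is the output; $y_S$ denotes the final growth values. *)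

From mathcomp Require Import all_boot all_order all_algebra.
From mathcomp Require Import reals.
Set Implicit Arguments. Unset Strict Implicit. Unset Printing Implicit Defensive.
Import Order.TTheory GRing.Theory Num.Theory.
Local Open Scope ring_scope.

(* An undirected (multi)graph: vertex type V, edge type E, each edge e has
   endpoints src e and dst e (orientation irrelevant everywhere below). *)
Section ShadowMoat.
Variables (R : realType) (V E : finType) (src dst : E -> V).

Definition delta (S : {set V}) : {set E} :=
  [set e | (src e \in S) != (dst e \in S)].

Definition cost (c : E -> R) (F : {set E}) : R := \sum_(e in F) c e.

Definition adjF (F : {set E}) : rel V := fun x y =>
  [exists e in F, ((src e == x) && (dst e == y)) || ((src e == y) && (dst e == x))].

Definition comp (F : {set E}) (x : V) : {set V} := [set z | connect (adjF F) x z].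

Definition is_comp (F : {set E}) (S : {set V}) : bool := [exists x, S == comp F x].

Definition crossing (F : {set E}) (e : E) : bool :=
  ~~ connect (adjF F) (src e) (dst e).

Definition is_active (t : V -> R) (tau : R) (S : {set V}) : bool :=
  [exists w in S, tau < t w].

Definition load (y : {set V} -> R) (e : E) : R :=
  \sum_(S : {set V} | e \in delta S) y S.

(* growth values at time s, starting from values y at time a, while the
   partition is the one of (V,F) and the activity of every component is the
   one it has at time a: active components grow at rate 1. *)
Definition y_at (t : V -> R) (F : {set E}) (y : {set V} -> R) (a s : R)
  (S : {set V}) : R :=
  y S + (if is_comp F S && is_active t a S then s - a else 0).

(* One phase of the process: continuous growth on the time interval [a, b]
   with forest F (during which no component changes its activity, some
   component is active, and no edge between different components becomes
   tight before time b), followed at time b by either nothing or the addition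
   of one edge between different components that is tight at time b. *)
Definition moat_step (c : E -> R) (t : V -> R) (a b : R) (F F' : {set E})
  (y y' : {set V} -> R) : Prop :=
  [/\ a <= b /\ (forall S, y' S = y_at t F y a b S),
      (forall s, a <= s < b -> forall S, is_comp F S ->
          is_active t s S = is_active t a S),
      (forall s, a <= s < b -> exists S, is_comp F S && is_active t s S),
      (forall s, a <= s < b -> forall e, crossing F e ->
          load (y_at t F y a s) e < c e) &
      (F' = F \/ exists e, [/\ crossing F e, load y' e = c e & F' = e |: F])].

Definition moat_run (c : E -> R) (t : V -> R) (k : nat) (tau : nat -> R)
  (Fs : nat -> {set E}) (ys : nat -> {set V} -> R) : Prop :=
  [/\ tau 0%N = 0, Fs 0%N = set0, (forall S, ys 0%N S = 0),
      (forall i, (i < k)%N ->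
         moat_step c t (tau i) (tau i.+1) (Fs i) (Fs i.+1) (ys i) (ys i.+1)) &
      (forall S, is_comp (Fs k) S -> ~~ is_active t (tau k) S)].

(* The family D: vertex sets that were an inactive component at some moment.
   The components of Fs i exist during the time interval [tau i, tau (i+1)]
   (and, for i = k, at the final moment tau k). *)
Definition inD (t : V -> R) (k : nat) (tau : nat -> R) (Fs : nat -> {set E})
  (S : {set V}) : Prop :=
  exists i, [/\ (i <= k)%N, is_comp (Fs i) S &
    exists s, tau i <= s <= tau (minn i.+1 k) /\ ~~ is_active t s S].

Definition prune_step (D : {set V} -> Prop) (F F' : {set E}) : Prop :=
  exists S e, [/\ D S, #|delta S :&: F| = 1%N, e \in delta S :&: F & F' = F :\ e].

Inductive prune_seq (D : {set V} -> Prop) : {set E} -> {set E} -> Prop :=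
| prune_done F : ~ (exists F', prune_step D F F') -> prune_seq D F F
| prune_more F F' F'' : prune_step D F F' -> prune_seq D F' F'' -> prune_seq D F F''.

(* (F, y) is an output (forest, final growth values) of shadow moat growing
   on (G, t), for some order of processing simultaneous events. *)
Definition shadow_moat_output (c : E -> R) (t : V -> R) (F : {set E})
  (y : {set V} -> R) : Prop :=
  exists k tau Fs ys, [/\ moat_run c t k tau Fs ys,
     prune_seq (inD t k tau Fs) (Fs k) F & y = ys k].

End ShadowMoat.

From Pilot Require Import Defs.
From mathcomp Require Import all_boot all_order all_algebra zify.
From mathcomp Require Import reals.
Set Implicit Arguments. Unset Strict Implicit. Unset Printing Implicit Defensive.
Import Order.TTheory GRing.Theory Num.Theory.

(* Every edge of the output forest F is tight, so c(F) = sum_S y_S |delta(S) & F|, and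
   y_S is the total length of the phases during which S is an active component.  It
   therefore suffices to bound each phase: if X is the forest of that phase, then the
   active components C of X satisfy sum_C |delta(C) & F| <= 2 #{C active, v notin C}.
   Contracting the components of X, the edges of F outside X form a forest on the
   components they touch, so their degrees sum to less than twice the number of these
   components.  Pruning leaves no inactive component of degree one, so each touched
   inactive component absorbs at least two, and at most one active component contains v. *)

Lemma sum_bool_card (T : finType) (P Q : pred T) :
  \sum_(x | P x) (Q x : nat) = #|[set x | P x && Q x]|.
Proof. by rewrite -sum1dep_card big_mkcondr; apply: eq_bigr => x _; case: (Q x). Qed.

Section Components.
Variables (V E : finType) (src dst : E -> V).
Implicit Types (X Y : {set E}) (C : {set V}) (e : E) (x y z : V).
Local Notation adj X := (adjF src dst X).
Local Notation comp X x := (Defs.comp src dst X x).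
Local Notation delta C := (delta src dst C).
Local Notation crossing X e := (crossing src dst X e).

Lemma adjF_sym X : symmetric (adj X).
Proof.
by move=> x y; apply/existsP/existsP => -[e /andP [eX H]]; exists e; rewrite eX orbC.
Qed.

Lemma connect_adjF_sym X : connect_sym (adj X).
Proof. exact/sym_connect_sym/adjF_sym. Qed.

Lemma adjF_edge X e : e \in X -> adj X (src e) (dst e).
Proof. by move=> eX; apply/existsP; exists e; rewrite eX !eqxx. Qed.

Lemma connect_adjF_sub X Y x y :
  X \subset Y -> connect (adj X) x y -> connect (adj Y) x y.
Proof.
move=> /subsetP sXY; apply: connect_sub => a b /existsP [e /andP [eX ab]].
by apply/connect1/existsP; exists e; rewrite sXY.
Qed.

Lemma mem_comp X x z : (z \in comp X x) = connect (adj X) x z.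
Proof. by rewrite inE. Qed.

Lemma comp_refl X x : x \in comp X x.
Proof. by rewrite mem_comp connect0. Qed.

Lemma comp_eq X x y : connect (adj X) x y -> comp X x = comp X y.
Proof.
by move=> cxy; apply/setP => z; rewrite !mem_comp (same_connect (connect_adjF_sym X) cxy).
Qed.

Lemma comp_eq_connect X x y : comp X x = comp X y -> connect (adj X) x y.
Proof. by move=> Exy; rewrite -mem_comp Exy comp_refl. Qed.

Lemma comp_memE X x y : y \in comp X x -> comp X x = comp X y.
Proof. by rewrite mem_comp => /comp_eq. Qed.

Lemma crossing_comp_neq X e : crossing X e -> comp X (src e) != comp X (dst e).
Proof. by move=> cr; apply: contra cr => /eqP/comp_eq_connect. Qed.

Lemma crossing_notin X e : crossing X e -> e \notin X.
Proof. by apply: contra => eX; apply/connect1/adjF_edge. Qed.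

Lemma connect_closed X C x z :
  (forall e, e \in X -> (src e \in C) = (dst e \in C)) ->
  x \in C -> connect (adj X) x z -> z \in C.
Proof.
move=> closedC xC /connectP [p + ->]; elim: p x xC => //= a p IH x xC /andP [xa pa].
apply: IH pa; case/existsP: xa => e /andP [eX /orP [] /andP [/eqP ex /eqP ea]]; subst.
  by rewrite -(closedC e eX).
by rewrite (closedC e eX).
Qed.

Lemma comp_edge_closed X x e : e \in X -> (src e \in comp X x) = (dst e \in comp X x).
Proof.
move=> eX; rewrite !mem_comp.
exact: (same_connect_r (connect_adjF_sym X) (connect1 (adjF_edge eX))).
Qed.

Lemma comp_delta_setI X x : delta (comp X x) :&: X = set0.
Proof.
apply/setP => e; rewrite in_setI in_set0 in_set; case eX: (e \in X); last by rewrite andbF.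
by rewrite comp_edge_closed // eqxx.
Qed.

Definition comps X : {set {set V}} := [set comp X x | x in V].
Definition ncomp X := #|comps X|.

Lemma is_compE X C : is_comp src dst X C = (C \in comps X).
Proof. by apply/existsP/imsetP => [[x /eqP ->] | [x _ ->]]; exists x. Qed.

Lemma comp_in_comps X x : comp X x \in comps X.
Proof. exact: imset_f. Qed.

Lemma comp_set0 x : comp set0 x = [set x].
Proof.
apply/setP => z; apply/idP/idP => [|/set1P ->]; last exact: comp_refl.
by rewrite mem_comp; apply: connect_closed (set11 x) => e; rewrite in_set0.
Qed.

Lemma ncomp_set0 : ncomp set0 = #|V|.
Proof.
by rewrite /ncomp card_in_imset // => x y _ _; rewrite !comp_set0 => /set1_inj.
Qed.

Lemma comp_setU1 X e x :
  comp (e |: X) x =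
  if connect (adj X) x (src e) || connect (adj X) x (dst e)
  then comp X (src e) :|: comp X (dst e) else comp X x.
Proof.
have sX : X \subset e |: X by exact: subsetUr.
have se : connect (adj (e |: X)) (src e) (dst e) by apply/connect1/adjF_edge/setU11.
set U := comp X (src e) :|: comp X (dst e).
have closedU f : f \in e |: X -> (src f \in U) = (dst f \in U).
  case/setU1P => [-> | fX]; last by rewrite !in_setU !comp_edge_closed.
  by rewrite !in_setU !comp_refl orbT.
apply/setP => z; case: ifP => linked.
  apply/idP/idP.
    rewrite mem_comp; apply: connect_closed closedU _.
    by rewrite !inE !(connect_adjF_sym X (src e)) !(connect_adjF_sym X (dst e)).
  have xe : connect (adj (e |: X)) x (src e).
    case/orP: linked => /(connect_adjF_sub sX) // xd.
    by apply: connect_trans xd _; rewrite connect_adjF_sym.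
  rewrite !inE => /orP [] /(connect_adjF_sub sX) ez; apply: connect_trans xe _ => //.
  exact: connect_trans se ez.
apply/idP/idP; last by rewrite !mem_comp; apply: connect_adjF_sub.
rewrite mem_comp; apply: connect_closed; last exact: comp_refl.
move=> f /setU1P [-> | fX]; last exact: comp_edge_closed.
by move/negbT: linked; rewrite negb_or !mem_comp => /andP [/negbTE -> /negbTE ->].
Qed.

Lemma comps_setU1 X e :
  comps (e |: X) =
  comp X (src e) :|: comp X (dst e) |: (comps X :\ comp X (src e) :\ comp X (dst e)).
Proof.
apply/setP => C; apply/imsetP/setU1P.
  move=> [x _ ->]; rewrite comp_setU1; case: ifPn => [_|]; first by left.
  rewrite negb_or => /andP [xs xd]; right; rewrite !inE comp_in_comps andbT.
  by apply/andP; split; [apply: contraNneq xd | apply: contraNneq xs]; apply: comp_eq_connect.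
case=> [-> | ]; first by exists (src e); rewrite // comp_setU1 connect0.
rewrite !inE => /and3P [Cd Cs /imsetP [x _ Cx]]; exists x => //.
rewrite comp_setU1 Cx; case: ifPn => // /orP [] /comp_eq Ex.
  by rewrite Cx Ex eqxx in Cs.
by rewrite Cx Ex eqxx in Cd.
Qed.

Lemma ncomp_setU1 X e :
  ncomp X = ncomp (e |: X) + (comp X (src e) != comp X (dst e)).
Proof.
rewrite /ncomp comps_setU1 cardsU1.
set s := comp X (src e); set d := comp X (dst e).
have -> : s :|: d \notin comps X :\ s :\ d.
  rewrite !inE; apply/negP => /and3P [_ Us /imsetP [x _ Ux]].
  have : src e \in s :|: d by rewrite inE comp_refl.
  by rewrite Ux => /comp_memE Exs; rewrite Ux Exs eqxx in Us.
rewrite (cardsD1 s) comp_in_comps (cardsD1 d (comps X :\ s)) !inE comp_in_comps.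
by rewrite andbT (eq_sym d) addnCA addnC.
Qed.

Lemma ncomp_le X : ncomp X <= #|V|.
Proof. exact: leq_imset_card. Qed.

Lemma card_le_ncomp_add X : #|V| <= ncomp X + #|X|.
Proof.
have [n] := ubnP #|X|; elim: n X => // n IH X; rewrite ltnS => leXn.
have [-> | [e eX]] := set_0Vmem X; first by rewrite ncomp_set0 cards0 addn0.
have := IH (X :\ e); rewrite (ncomp_setU1 (X :\ e) e) setD1K // (cardsD1 e X) eX in leXn *.
by case: (_ != _) => /=; lia.
Qed.

(* Acyclicity, phrased by counting: every subset of a forest lowers the number of
   components by its own size, which by [card_le_ncomp_add] is the most possible. *)
Definition forest X := forall Y, Y \subset X -> ncomp Y + #|Y| <= #|V|.

Lemma forest_sub X Y : forest X -> Y \subset X -> forest Y.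
Proof. by move=> fX sYX Z sZY; apply/fX/(subset_trans sZY). Qed.

Lemma forest_set0 : forest set0.
Proof. by move=> Y; rewrite subset0 => /eqP ->; rewrite cards0 addn0 ncomp_le. Qed.

Lemma crossing_sub X Y e : Y \subset X -> crossing X e -> crossing Y e.
Proof. by move=> sYX; apply: contra; apply: connect_adjF_sub. Qed.

Lemma forest_setU1 X e : forest X -> crossing X e -> forest (e |: X).
Proof.
move=> fX cr Y sY; have [eY | eY] := boolP (e \in Y); last first.
  by apply: fX; apply/subsetP => f fY; case/setU1P: (subsetP sY f fY) => // fe; rewrite -fe fY in eY.
have sY' : Y :\ e \subset X by rewrite subDset.
have := fX _ sY'; rewrite (ncomp_setU1 (Y :\ e) e) setD1K // (cardsD1 e Y) eY.
by rewrite crossing_comp_neq /=; [lia | apply: crossing_sub cr].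
Qed.

Lemma comps_incident X e : crossing X e ->
  [set C | (C \in comps X) && (e \in delta C)] = [set comp X (src e); comp X (dst e)].
Proof.
move=> cr; apply/setP => C; rewrite !inE; apply/andP/orP => [[/imsetP [x _ ->]] | ].
  case: (boolP (src e \in comp X x)) => [/comp_memE -> | _]; first by left.
  by rewrite eq_sym eqbF_neg negbK => /comp_memE ->; right.
have nsd : dst e \notin comp X (src e) by rewrite mem_comp.
have nds : src e \notin comp X (dst e) by rewrite mem_comp connect_adjF_sym.
by case=> /eqP ->; rewrite comp_in_comps comp_refl ?(negbTE nsd) ?(negbTE nds).
Qed.

(* Handshake lemma for the graph obtained by contracting the components of [X]. *)
Lemma sum_card_delta_comps X Y : (forall e, e \in Y -> crossing X e) ->
  \sum_(C in comps X) #|delta C :&: Y| = 2 * #|Y|.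
Proof.
move=> crY; rewrite mulnC -sum_nat_const.
under eq_bigr do rewrite -sum1_card.
rewrite (exchange_big_dep (mem Y)) /= => [|C e _]; last by rewrite inE => /andP [].
apply: eq_bigr => e eY; rewrite sum1dep_card.
rewrite (eq_finset (fun C => (C \in comps X) && (e \in delta C))) => [|C].
  by rewrite comps_incident ?cards2 ?crossing_comp_neq ?crY.
by rewrite inE eY andbT.
Qed.

Lemma comp_setU_delta0 X Y x :
  delta (comp X x) :&: Y = set0 -> comp (X :|: Y) x = comp X x.
Proof.
move=> dY0; apply/setP => z; apply/idP/idP; last by rewrite !mem_comp; apply/connect_adjF_sub/subsetUl.
rewrite mem_comp; apply: connect_closed (comp_refl X x) => f /setUP [fX | fY].
  exact: comp_edge_closed.
have : f \notin delta (comp X x) :&: Y by rewrite dY0 inE.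
by rewrite in_setI fY andbT /Defs.delta in_set negbK => /eqP.
Qed.

(* [Y] is a forest on the contracted graph whose vertices are the components of [X],
   so it has fewer edges than the components it touches. *)
Lemma card_lt_incident_comps X Y :
  forest (X :|: Y) -> (forall e, e \in Y -> crossing X e) -> Y != set0 ->
  #|Y| < #|[set C in comps X | delta C :&: Y != set0]|.
Proof.
move=> fXY crY /set0Pn [e eY]; set N := [set C in comps X | _].
have cardXY : #|X :|: Y| = #|X| + #|Y|.
  rewrite cardsU; suff -> : X :&: Y = set0 by rewrite cards0 subn0.
  by apply/setP => f; rewrite !inE andbC; case: (boolP (f \in Y)) => // /crY/crossing_notin/negbTE.
have keep C : C \in comps X :\: N -> C \in comps (X :|: Y).
  rewrite !inE negb_and negbK => /andP [/orP [nC | /eqP dC0] /imsetP [x _ Cx]].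
    by rewrite Cx comp_in_comps in nC.
  by rewrite Cx -(comp_setU_delta0 (Y := Y)) ?comp_in_comps // -Cx.
have fresh : comp (X :|: Y) (src e) \notin comps X :\: N.
  apply/negP => /setDP [/imsetP [x _ Ex]]; rewrite Ex; apply/negP/negPn.
  have : src e \in comp X x by rewrite -Ex; apply: comp_refl.
  move=> /comp_memE ->; rewrite inE comp_in_comps /=; apply/set0Pn.
  exists e; rewrite in_setI eY andbT /Defs.delta in_set comp_refl.
  by rewrite mem_comp (negbTE (crY e eY)).
have lt_ncomp : #|comps X :\: N| < ncomp (X :|: Y).
  have sub : comp (X :|: Y) (src e) |: (comps X :\: N) \subset comps (X :|: Y).
    by apply/subsetP => C /setU1P [-> | /keep //]; exact: comp_in_comps.
  by have := subset_leq_card sub; rewrite cardsU1 fresh.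
have splitN : ncomp X = #|N| + #|comps X :\: N|.
  by rewrite /ncomp -(cardsID N (comps X)) (setIidPr _) //; apply/subsetP => C; rewrite inE => /andP [].
have := fXY _ (subxx _); have := card_le_ncomp_add X; lia.
Qed.

Lemma card_comps_notin X (P : pred {set V}) v :
  #|[set C in comps X | P C]| <= #|[set C in comps X | P C && (v \notin C)]|.+1.
Proof.
apply: leq_trans (_ : #|comp X v |: [set C in comps X | P C && (v \notin C)]| <= _).
  apply/subset_leq_card/subsetP => C; rewrite !inE => /andP [CX PC].
  case: (boolP (v \in C)) => [vC | _]; last by rewrite CX PC /= orbT.
  by case/imsetP: CX vC => x _ -> /comp_memE ->; rewrite eqxx.
by rewrite cardsU1; case: (_ \notin _).
Qed.

(* The degree bound of one phase of the primal-dual analysis: [F] is the pruned forest,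
   [X] the forest of the phase and [act] its active components. *)
Lemma sum_card_delta_active X F (act : pred {set V}) v :
  forest (X :|: F) -> (forall e, e \in F :\: X -> crossing X e) ->
  (forall C, C \in comps X -> ~~ act C -> #|delta C :&: F| != 1) ->
  \sum_(C in comps X | act C) #|delta C :&: F| <=
    2 * #|[set C in comps X | act C && (v \notin C)]|.
Proof.
move=> fXF crY deg1; set Y := F :\: X; set d := fun C => #|delta C :&: Y|.
have degY C : C \in comps X -> #|delta C :&: F| = d C.
  case/imsetP=> x _ ->; have : [disjoint delta (comp X x) :&: F & X].
    by rewrite -setI_eq0 setIAC comp_delta_setI set0I.
  by rewrite /d /Y setIDA => /setDidPl ->.
rewrite (eq_bigr d) => [|C /andP [CX _]]; last exact: degY.
set SA := \sum_(C in _ | _) _; set SI := \sum_(C in comps X | ~~ act C) d C.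
have hand : SA + SI = 2 * #|Y| by rewrite -(sum_card_delta_comps crY) (bigID act).
have [Y0 | nY0] := eqVneq Y set0; first by move: hand; rewrite Y0 cards0; lia.
set pos := fun C => 0 < d C.
set a := \sum_(C in comps X | act C) pos C; set b := \sum_(C in comps X | ~~ act C) pos C.
have inact : 2 * b <= SI.
  rewrite /b big_distrr; apply: leq_sum => C /andP [CX nC].
  by move: (deg1 C CX nC); rewrite degY // /pos /d; case: #|_| => [|[|]].
have incident : #|Y| < a + b.
  rewrite /a /b -(bigID act) sum_bool_card.
  apply: leq_trans (card_lt_incident_comps (forest_sub fXF (setUS X (subsetDl F X))) crY nY0) _.
  by apply/subset_leq_card/subsetP => C; rewrite !inE /pos /d card_gt0.
have act_le : a <= #|[set C in comps X | act C]|.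
  by rewrite -sum1dep_card; apply: leq_sum => C _; case: (pos C).
have := card_comps_notin X act v; lia.
Qed.

End Components.

Local Open Scope ring_scope.

Section MoatRun.
Variables (R : realType) (V E : finType) (src dst : E -> V).
Local Notation delta C := (delta src dst C).
Local Notation load := (load src dst).

Lemma cost_tight (c : E -> R) (y : {set V} -> R) (F : {set E}) :
  (forall e, e \in F -> load y e = c e) ->
  cost c F = \sum_(S : {set V}) y S * #|delta S :&: F|%:R.
Proof.
move=> tight; rewrite /cost (eq_bigr _ (fun e eF => esym (tight e eF))) /load.
rewrite (exchange_big_dep predT) //=; apply: eq_bigr => S _.
rewrite -sum1_card natr_sum mulr_sumr big_mkcondr /= [RHS]big_mkcond [LHS]big_mkcond.
apply: eq_bigr => e _.
by rewrite in_setI mulr1; case: (e \in F); case: (e \in delta S).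
Qed.

Lemma load_y_at_in (t : V -> R) (X : {set E}) (y : {set V} -> R) a b e :
  e \in X -> load (y_at src dst t X y a b) e = load y e.
Proof.
move=> eX; apply: eq_bigr => S eS; rewrite /y_at is_compE.
case: (boolP (S \in comps src dst X)) => [/imsetP [x _ Sx] | _]; last by rewrite addr0.
by move: eS; rewrite Sx inE comp_edge_closed // eqxx.
Qed.

Variables (c : E -> R) (t : V -> R) (k : nat) (tau : nat -> R)
  (Fs : nat -> {set E}) (ys : nat -> {set V} -> R).
Hypothesis run : moat_run src dst c t k tau Fs ys.

Definition phase_growth i S : R :=
  if is_comp src dst (Fs i) S && is_active t (tau i) S then tau i.+1 - tau i else 0.

Lemma run_step i : (i < k)%N ->
  moat_step src dst c t (tau i) (tau i.+1) (Fs i) (Fs i.+1) (ys i) (ys i.+1).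
Proof. by case: run => _ _ _ + _; apply. Qed.

Lemma tau_leS i : (i < k)%N -> tau i <= tau i.+1.
Proof. by case/run_step => [[]]. Qed.

Lemma Fs_subS i : (i < k)%N -> Fs i \subset Fs i.+1.
Proof. by case/run_step => _ _ _ _ [-> | [e [_ _ ->]]] //; exact: subsetUr. Qed.

Lemma Fs_sub i j : (i <= j <= k)%N -> Fs i \subset Fs j.
Proof.
case/andP; elim: j => [|j IH]; first by rewrite leqn0 => /eqP ->.
rewrite leq_eqVlt => /orP [/eqP -> // | ij] jk.
exact: subset_trans (IH ij (ltnW jk)) (Fs_subS jk).
Qed.

Lemma Fs_crossing i j e : (i <= j <= k)%N -> e \in Fs j -> e \notin Fs i ->
  crossing src dst (Fs i) e.
Proof.
case/andP; elim: j => [|j IH]; first by rewrite leqn0 => /eqP -> _ ->.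
rewrite leq_eqVlt => /orP [/eqP -> _ -> // | ij] jk.
case: (run_step jk) => _ _ _ _ [-> | [f [crf _ ->]]]; first exact: IH ij (ltnW jk).
case/setU1P => [-> _ | ]; last exact: IH ij (ltnW jk).
by apply: crossing_sub crf; apply: Fs_sub; rewrite -ltnS ij (ltnW jk).
Qed.

Lemma Fs_forest j : (j <= k)%N -> forest src dst (Fs j).
Proof.
elim: j => [|j IH jk]; first by case: run => _ -> _ _ _ _; exact: forest_set0.
case: (run_step jk) => _ _ _ _ [-> | [f [crf _ ->]]]; first exact: IH (ltnW jk).
exact: forest_setU1 (IH (ltnW jk)) crf.
Qed.

Lemma Fs_tight j e : (j <= k)%N -> e \in Fs j -> load (ys j) e = c e.
Proof.
elim: j => [|j IH jk]; first by case: run => _ -> _ _ _ _; rewrite inE.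
case: (run_step jk) => [[_ ysS] _ _ _ Fadd].
have loadS f : load (ys j.+1) f = load (y_at src dst t (Fs j) (ys j) (tau j) (tau j.+1)) f.
  by apply: eq_bigr => S _; rewrite ysS.
rewrite loadS; case: Fadd => [-> eF | [f [_ tf ->]] /setU1P [-> | eF]].
- by rewrite load_y_at_in // IH // ltnW.
- by rewrite -loadS.
- by rewrite load_y_at_in // IH // ltnW.
Qed.

Lemma ys_sum_phases S : ys k S = \sum_(i < k) phase_growth i S.
Proof.
suff: forall j, (j <= k)%N -> ys j S = \sum_(i < j) phase_growth i S by apply.
elim=> [|j IH jk]; first by case: run => _ _ -> _ _; rewrite big_ord0.
by case: (run_step jk) => [[_ ->] _ _ _ _]; rewrite /y_at big_ord_recr IH // ltnW.
Qed.

Variable F : {set E}.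
Hypothesis sub_F : F \subset Fs k.
Hypothesis pruned : ~ exists F', prune_step src dst (inD src dst t k tau Fs) F F'.

Lemma pruned_inactive_degree i C : (i < k)%N -> C \in comps src dst (Fs i) ->
  ~~ is_active t (tau i) C -> #|delta C :&: F| != 1%N.
Proof.
move=> ik CFi nC; apply/negP => /eqP dC1; apply: pruned.
have [e eC] : exists e, e \in delta C :&: F by apply/card_gt0P; rewrite dC1.
exists (F :\ e), C, e; split=> //; exists i; split; first exact: ltnW.
  by rewrite is_compE.
by exists (tau i); rewrite lexx (minn_idPl ik) tau_leS.
Qed.

Lemma phase_cost_bound v i : (i < k)%N ->
  \sum_(S : {set V}) phase_growth i S * #|delta S :&: F|%:R <=
  2 * \sum_(S : {set V} | v \notin S) phase_growth i S.
Proof.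
move=> ik; set act := is_active t (tau i).
have -> : \sum_(S : {set V}) phase_growth i S * #|delta S :&: F|%:R =
    (tau i.+1 - tau i) * (\sum_(C in comps src dst (Fs i) | act C) #|delta C :&: F|)%:R.
  rewrite natr_sum mulr_sumr [RHS]big_mkcond; apply: eq_bigr => S _.
  by rewrite /phase_growth is_compE /act; case: (_ && _); rewrite ?mul0r.
have -> : \sum_(S : {set V} | v \notin S) phase_growth i S =
    (tau i.+1 - tau i) * #|[set C in comps src dst (Fs i) | act C && (v \notin C)]|%:R.
  rewrite -sum1dep_card natr_sum mulr_sumr [RHS]big_mkcond [LHS]big_mkcond.
  apply: eq_bigr => S _; rewrite /phase_growth is_compE /act.
  by case: (v \in S); case: (_ \in _); case: (is_active _ _ S); rewrite /= ?mulr1.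
rewrite mulrCA ler_wpM2l ?subr_ge0 ?tau_leS // -natrM ler_nat.
apply: sum_card_delta_active => [|e /setDP [eF eFi] | C]; last exact: pruned_inactive_degree.
  apply: forest_sub (Fs_forest (leqnn k)) _; rewrite subUset sub_F andbT.
  by apply: Fs_sub; rewrite (ltnW ik) leqnn.
by apply: (@Fs_crossing _ k); rewrite ?(subsetP sub_F) // (ltnW ik) leqnn.
Qed.

End MoatRun.

Lemma prune_seq_final (V E : finType) (src dst : E -> V) (D : {set V} -> Prop)
  (F0 F : {set E}) :
  prune_seq src dst D F0 F -> F \subset F0 /\ ~ exists F', prune_step src dst D F F'.
Proof.
elim=> [F1 final | F1 F2 F3 [S [e [_ _ _ ->]]] _ [sF32 final]]; first by split.
by split=> //; apply: subset_trans sF32 (subD1set _ _).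
Qed.

Unset Implicit Arguments.

Theorem mainTheorem3 (R : realType) (V E : finType) (src dst : E -> V)
  (c : E -> R) (t : V -> R)
  (hc : forall e, 0 <= c e) (ht : forall v, 0 <= t v)
  (F : {set E}) (y : {set V} -> R) :
  shadow_moat_output src dst c t F y ->
  forall v : V, cost c F <= 2 * \sum_(S : {set V} | v \notin S) y S.
Proof.
move=> [k [tau [Fs [ys [run /prune_seq_final [sub_F pruned] ->]]]]] v.
rewrite (cost_tight (fun e eF => Fs_tight run (leqnn k) (subsetP sub_F e eF))).
under eq_bigr do rewrite (ys_sum_phases run) mulr_suml.
under [X in _ <= _ * X]eq_bigr do rewrite (ys_sum_phases run).
rewrite exchange_big [X in _ <= _ * X]exchange_big mulr_sumr /=.
by apply: ler_sum => i _; apply: (phase_cost_bound run sub_F pruned).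
Qed.
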